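(* Let $\omega$ be a weight function with $\omega(t)=o(t)$ as $t\to\infty$, and let $\{W^x\}_{x>0}$ be its associated weight matrix. Then for every $x>0$, writing $M=W^x$ and $m_k=M_k/k!$, there is $C\ge1$ such that for all $t>0$: $$\omega^*(t)\le C\omega_M^*(t/C)+C,\qquad \omega_M^*(t)\le C\omega^*(t/C)+C,$$ $$\omega^*(t)\le C\omega_m(C/t)+C,\qquad \omega_m(t)\le C\omega^*\!\left(\tfrac{1}{eCt}\right)+C,$$ and in particular $\exp(\omega^*(t))\le\left(\frac{e}{h_m(t/C)}\right)^C$.
   Context: A weight function is a continuous increasing $\omega:[0,\infty)\to[0,\infty)$ with $\omega(0)=0$, $\omega(t)\to\infty$, $\omega(2t)=O(\omega(t))$, $\omega(t)=O(t)$, $\log t=o(\omega(t))$, and $\varphi(t)=\omega(e^t)$ convex; normalized so that $\omega|_{[0,1]}=0$, $\varphi^*(t)=\sup_{s\ge0}(st-\varphi(s))$. Weight matrix: $W^x_k=\exp(\frac1x\varphi^*(xk))$. Conjugate: $\omega^*(t)=\sup_{s\ge0}(\omega(s)-st)$. For a positive sequence $M$ with $M_0=1$: $\omega_M(t)=\sup_k\log(t^k/M_k)$, $h_m(t)=\inf_k m_kt^k$. *)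

From Stdlib Require Import Reals Arith ClassicalEpsilon.
Open Scope R_scope.

(* Supremum of a set of reals: the least upper bound when the set is
   nonempty and bounded above (junk value 0 otherwise). *)
Definition Rsup (E : R -> Prop) : R :=
  match excluded_middle_informative (bound E /\ exists x, E x) with
  | left H => proj1_sig (completeness E (proj1 H) (proj2 H))
  | right _ => 0
  end.

Definition Rinf (E : R -> Prop) : R := - Rsup (fun y => E (- y)).

Definition phi (omega : R -> R) (t : R) : R := omega (exp t).

(* Weight function (normalized: omega = 0 on [0,1]). Only values on [0,oo) matter. *)
Definition weight_function (omega : R -> R) : Prop :=
  (forall t, 0 < t -> continuity_pt omega t) /\
  (forall s t, 0 <= s -> s <= t -> omega s <= omega t) /\
  (forall t, 0 <= t -> t <= 1 -> omega t = 0) /\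
  (forall K, exists T, forall t, T <= t -> K <= omega t) /\
  (exists L T, 0 < L /\ forall t, T <= t -> omega (2 * t) <= L * omega t) /\
  (exists L T, 0 < L /\ forall t, T <= t -> omega t <= L * t) /\
  (forall eps, 0 < eps -> exists T, forall t, T <= t -> ln t <= eps * omega t) /\
  (forall a b l, 0 <= l <= 1 ->
     phi omega (l * a + (1 - l) * b) <= l * phi omega a + (1 - l) * phi omega b).

Definition little_o_t (omega : R -> R) : Prop :=
  forall eps, 0 < eps -> exists T, forall t, T <= t -> omega t <= eps * t.

Definition phi_star (omega : R -> R) (t : R) : R :=
  Rsup (fun y => exists s, 0 <= s /\ y = s * t - phi omega s).

Definition W (omega : R -> R) (x : R) (k : nat) : R :=
  exp (/ x * phi_star omega (x * INR k)).

Definition omega_star (omega : R -> R) (t : R) : R :=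
  Rsup (fun y => exists s, 0 <= s /\ y = omega s - s * t).

Definition omega_M (M : nat -> R) (t : R) : R :=
  Rsup (fun y => exists k : nat, y = ln (t ^ k / M k)).

Definition omega_M_star (M : nat -> R) (t : R) : R :=
  Rsup (fun y => exists s, 0 <= s /\ y = omega_M M s - s * t).

Definition h_fun (m : nat -> R) (t : R) : R :=
  Rinf (fun y => exists k : nat, y = m k * t ^ k).

(* By Young's inequality [x omega_M <= omega] for [M = W^x].  Conversely, rounding a
   subgradient [g] of the convex function [phi] at [ln s] down to the lattice [x N] gives an
   index [k] with [x ln (s^k / M_k) >= omega s - x ln s]; since [ln s = o(omega s)], [omega]
   and [omega_M] agree up to affine changes, and hence so do their Legendre transforms, which
   are finite because [omega = o(t)].  Dividing [M_k] by [k!] only shifts [omega_M] by a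
   linear term, because [k ln y <= y + ln k!], and the Legendre transform absorbs it.  Finally
   [h_m t = exp (- omega_m (1/t))]. *)
From Stdlib Require Import Reals Arith Lra Lia ClassicalEpsilon.
From Coquelicot Require Import Rcomplements.
Open Scope R_scope.

Lemma Rsup_upper (E : R -> Prop) (b y : R) :
  (forall z, E z -> z <= b) -> E y -> y <= Rsup E.
Proof.
  intros Hb Hy. unfold Rsup.
  destruct (excluded_middle_informative _) as [H|H].
  - destruct (completeness E (proj1 H) (proj2 H)) as [m Hm]; simpl; exact (proj1 Hm y Hy).
  - exfalso; apply H; split; [exists b; exact Hb | exists y; exact Hy].
Qed.

Lemma Rsup_least (E : R -> Prop) (b : R) :
  (exists y, E y) -> (forall z, E z -> z <= b) -> Rsup E <= b.
Proof.
  intros Hne Hb. unfold Rsup.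
  destruct (excluded_middle_informative _) as [H|H].
  - destruct (completeness E (proj1 H) (proj2 H)) as [m Hm]; simpl; exact (proj2 Hm b Hb).
  - exfalso; apply H; split; [exists b; exact Hb | exact Hne].
Qed.

Lemma Rinf_lower (E : R -> Prop) (b y : R) :
  (forall z, E z -> b <= z) -> E y -> Rinf E <= y.
Proof.
  intros Hb Hy. unfold Rinf.
  enough (- y <= Rsup (fun z => E (- z))) by lra.
  apply (Rsup_upper _ (- b)).
  - intros z Hz. specialize (Hb _ Hz). lra.
  - now rewrite Ropp_involutive.
Qed.

Lemma Rinf_greatest (E : R -> Prop) (b : R) :
  (exists y, E y) -> (forall z, E z -> b <= z) -> b <= Rinf E.
Proof.
  intros [y Hy] Hb. unfold Rinf.
  enough (Rsup (fun z => E (- z)) <= - b) by lra.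
  apply Rsup_least.
  - exists (- y). now rewrite Ropp_involutive.
  - intros z Hz. specialize (Hb _ Hz). lra.
Qed.

Lemma exp_le (a b : R) : a <= b -> exp a <= exp b.
Proof. intros [H|H]; [left; exact (exp_increasing _ _ H) | rewrite H; apply Rle_refl]. Qed.

Lemma ln_nonpos (y : R) : y <= 0 -> ln y = 0.
Proof. intros Hy. unfold ln. case Rlt_dec; [intros H; exfalso; lra | reflexivity]. Qed.

Lemma ln_le_0 (y : R) : y <= 1 -> ln y <= 0.
Proof.
  intros Hy. destruct (Rle_lt_dec y 0) as [H|H]; [rewrite ln_nonpos by exact H; lra|].
  rewrite <- ln_1. now apply ln_le.
Qed.

Lemma ln_le_sub1 (y : R) : 0 < y -> ln y <= y - 1.
Proof. intros Hy. pose proof (exp_ineq1_le (ln y)) as H. rewrite exp_ln in H; lra. Qed.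

Lemma fact_le_pow (k : nat) : INR (fact k) <= INR k ^ k.
Proof.
  induction k as [|k IH]; [simpl; lra|].
  change (fact (S k)) with (S k * fact k)%nat.
  rewrite mult_INR, <- tech_pow_Rmult.
  assert (INR k ^ k <= INR (S k) ^ k)
    by (apply pow_incr; split; [apply pos_INR | rewrite S_INR; lra]).
  pose proof (pos_INR (S k)). nra.
Qed.

Lemma ln_fact_le (k : nat) : ln (INR (fact k)) <= INR k * ln (INR k).
Proof.
  destruct k as [|k]; [simpl; rewrite ln_1; lra|].
  rewrite <- ln_pow by (apply lt_0_INR; lia).
  apply ln_le; [apply INR_fact_lt_0 | apply fact_le_pow].
Qed.

Lemma ln_fact_ge (k : nat) : INR k * ln (INR k) - INR k <= ln (INR (fact k)).
Proof.
  induction k as [|k IH]; [simpl; rewrite ln_1; lra|].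
  change (fact (S k)) with (S k * fact k)%nat.
  rewrite mult_INR, ln_mult by (apply INR_fact_lt_0 || (apply lt_0_INR; lia)).
  enough (INR k * (ln (INR (S k)) - ln (INR k)) <= 1)
    by (rewrite S_INR in *; nra).
  destruct k as [|k]; [simpl; lra|].
  set (a := INR (S k)). assert (Ha : 0 < a) by (apply lt_0_INR; lia).
  rewrite S_INR; fold a.
  (* [ln (1 + 1/a) <= 1/a] *)
  pose proof (ln_le_sub1 ((a + 1) / a) ltac:(apply Rdiv_lt_0_compat; lra)) as H.
  rewrite ln_div in H by lra.
  replace ((a + 1) / a - 1) with (/ a) in H by (field; lra).
  apply (Rmult_le_compat_l a) in H; [|lra].
  rewrite Rinv_r in H by lra. exact H.
Qed.

Lemma ln_pow_div_fact_le (y : R) (k : nat) : 0 < y -> ln (y ^ k / INR (fact k)) <= y.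
Proof.
  intros Hy.
  rewrite ln_div, ln_pow by first [apply INR_fact_lt_0 | apply pow_lt; lra | lra].
  pose proof (ln_fact_ge k).
  destruct k as [|k]; [simpl in *; lra|].
  assert (Hk : 0 < INR (S k)) by (apply lt_0_INR; lia).
  pose proof (ln_le_sub1 (y / INR (S k)) ltac:(apply Rdiv_lt_0_compat; lra)) as H1.
  rewrite ln_div in H1 by lra.
  apply (Rmult_le_compat_l (INR (S k))) in H1; [|lra].
  replace (INR (S k) * (y / INR (S k) - 1)) with (y - INR (S k)) in H1 by (field; lra).
  lra.
Qed.

(* [omega_star omega] and [omega_M_star M] are [legendre omega] and [legendre (omega_M M)]. *)
Definition legendre (f : R -> R) (t : R) : R :=
  Rsup (fun y => exists s, 0 <= s /\ y = f s - s * t).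

Lemma legendre_ge (f : R -> R) (t B s : R) :
  (forall s, 0 <= s -> f s - s * t <= B) -> 0 <= s -> f s - s * t <= legendre f t.
Proof.
  intros HB Hs. apply (Rsup_upper _ B); [|now exists s].
  intros y [s' [Hs' ->]]. now apply HB.
Qed.

Lemma legendre_le (f : R -> R) (t b : R) :
  (forall s, 0 <= s -> f s - s * t <= b) -> legendre f t <= b.
Proof.
  intros Hb. apply Rsup_least; [now exists (f 0 - 0 * t), 0; split; [lra|]|].
  intros y [s [Hs ->]]. now apply Hb.
Qed.

Lemma legendre_le_scaled (f g : R -> R) (a b t B : R) : 0 < a ->
  (forall s, 0 <= s -> g s - s * (t / a) <= B) ->
  (forall s, 0 <= s -> f s <= a * g s + b) ->
  legendre f t <= a * legendre g (t / a) + b.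
Proof.
  intros Ha HB Hfg. apply legendre_le. intros s Hs.
  pose proof (legendre_ge g (t / a) B s HB Hs).
  specialize (Hfg s Hs).
  replace (s * t) with (a * (s * (t / a))) by (field; lra).
  nra.
Qed.

Lemma omega_M_ge (M : nat -> R) (t B : R) (k : nat) :
  (forall k, ln (t ^ k / M k) <= B) -> ln (t ^ k / M k) <= omega_M M t.
Proof.
  intros HB. apply (Rsup_upper _ B); [|now exists k].
  intros y [j ->]. apply HB.
Qed.

Lemma omega_M_le (M : nat -> R) (t b : R) :
  (forall k, ln (t ^ k / M k) <= b) -> omega_M M t <= b.
Proof.
  intros Hb. apply Rsup_least; [now exists (ln (t ^ 0 / M 0%nat)), 0%nat|].
  intros y [k ->]. apply Hb.
Qed.

Lemma omega_M_ge0 (M : nat -> R) (t B : R) : M 0%nat = 1 ->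
  (forall k, ln (t ^ k / M k) <= B) -> 0 <= omega_M M t.
Proof.
  intros HM0 HB. pose proof (omega_M_ge M t B 0 HB) as H.
  rewrite HM0, pow_O, Rdiv_1_r, ln_1 in H. exact H.
Qed.

Lemma omega_M_le_shift (M : nat -> R) (s b B : R) :
  (forall k, 0 < M k) -> 0 < s -> 0 < b ->
  (forall k, ln ((/ b) ^ k / (M k / INR (fact k))) <= B) ->
  omega_M M s <= s * b + omega_M (fun k => M k / INR (fact k)) (/ b).
Proof.
  intros HM Hs Hb HB. apply omega_M_le. intros k.
  pose proof (HM k). pose proof (INR_fact_lt_0 k). pose proof (pow_lt b k Hb).
  replace (s ^ k / M k)
    with ((s * b) ^ k / INR (fact k) * ((/ b) ^ k / (M k / INR (fact k))))
    by (rewrite Rpow_mult_distr, pow_inv; field; lra).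
  rewrite ln_mult.
  - pose proof (ln_pow_div_fact_le (s * b) k ltac:(nra)).
    pose proof (omega_M_ge _ (/ b) B k HB). lra.
  - apply Rdiv_lt_0_compat; [apply pow_lt; nra | lra].
  - apply Rdiv_lt_0_compat; [apply pow_lt, Rinv_0_lt_compat; lra | apply Rdiv_lt_0_compat; lra].
Qed.

Lemma h_fun_exp (m : nat -> R) (tau B : R) : (forall k, 0 < m k) -> 0 < tau ->
  (forall k, ln ((/ tau) ^ k / m k) <= B) ->
  h_fun m tau = exp (- omega_M m (/ tau)).
Proof.
  intros Hm Htau HB.
  set (a := omega_M m (/ tau)).
  assert (Hterm : forall k, ln ((/ tau) ^ k / m k) = - ln (m k * tau ^ k)).
  { intros k. pose proof (Hm k). pose proof (pow_lt tau k Htau).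
    rewrite <- ln_Rinv by nra. f_equal. rewrite pow_inv. field; lra. }
  assert (Hlow : forall k, exp (- a) <= m k * tau ^ k).
  { intros k. pose proof (Hm k). pose proof (pow_lt tau k Htau).
    rewrite <- (exp_ln (m k * tau ^ k)) by nra. apply exp_le.
    pose proof (omega_M_ge m (/ tau) B k HB) as Hk. rewrite Hterm in Hk. fold a in Hk. lra. }
  assert (Hh : exp (- a) <= h_fun m tau).
  { apply Rinf_greatest; [now exists (m 0%nat * tau ^ 0), 0%nat|].
    intros z [k ->]. apply Hlow. }
  apply Rle_antisym; [|exact Hh].
  pose proof (exp_pos (- a)).
  rewrite <- (exp_ln (h_fun m tau)) by lra. apply exp_le.
  enough (a <= - ln (h_fun m tau)) by lra.
  apply omega_M_le. intros k. rewrite Hterm.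
  enough (ln (h_fun m tau) <= ln (m k * tau ^ k)) by lra.
  apply ln_le; [lra|].
  apply (Rinf_lower _ 0); [|now exists k].
  intros z [j ->]. pose proof (Hm j). pose proof (pow_lt tau j Htau). nra.
Qed.

Section Convex.

Variable f : R -> R.
Hypothesis f_convex : forall a b l, 0 <= l <= 1 ->
  f (l * a + (1 - l) * b) <= l * f a + (1 - l) * f b.

Lemma convex_slope_le (a u b : R) : a < u -> u < b ->
  (f u - f a) / (u - a) <= (f b - f u) / (b - u).
Proof.
  intros Hau Hub.
  set (l := (b - u) / (b - a)).
  assert (Hl : 0 <= l <= 1).
  { unfold l; split; [apply Rmult_le_pos; [lra | left; apply Rinv_0_lt_compat; lra]|].
    apply (Rmult_le_reg_r (b - a)); [lra|]. field_simplify; lra. }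
  pose proof (f_convex a b l Hl) as H.
  replace (l * a + (1 - l) * b) with u in H by (unfold l; field; lra).
  apply (Rmult_le_compat_l (b - a)) in H; [|lra].
  replace ((b - a) * (l * f a + (1 - l) * f b))
    with ((b - u) * f a + (u - a) * f b) in H by (unfold l; field; lra).
  apply (Rmult_le_reg_r ((u - a) * (b - u))); [nra|].
  unfold Rdiv. field_simplify; [|lra|lra].
  nra.
Qed.

(* The supremum of the slopes of the chords ending at [u] is a subgradient. *)
Lemma convex_subgradient (u : R) : exists g, forall s, f u + (s - u) * g <= f s.
Proof.
  set (E := fun v => exists a, a < u /\ v = (f u - f a) / (u - a)).
  assert (HE : forall v, E v -> v <= (f (u + 1) - f u) / (u + 1 - u)).
  { intros v [a [Ha ->]]. apply convex_slope_le; lra. }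
  exists (Rsup E). intros s.
  destruct (Rtotal_order s u) as [Hs|[Hs|Hs]].
  - assert (Hv : (f u - f s) / (u - s) <= Rsup E)
      by (apply (Rsup_upper _ _ _ HE); now exists s).
    apply (Rmult_le_compat_l (u - s)) in Hv; [|lra].
    replace ((u - s) * ((f u - f s) / (u - s))) with (f u - f s) in Hv by (field; lra).
    lra.
  - subst. lra.
  - assert (Hv : Rsup E <= (f s - f u) / (s - u)).
    { apply Rsup_least; [now exists ((f u - f (u - 1)) / (u - (u - 1))), (u - 1); split; [lra|]|].
      intros v [a [Ha ->]]. apply convex_slope_le; lra. }
    apply (Rmult_le_compat_l (s - u)) in Hv; [|lra].
    replace ((s - u) * ((f s - f u) / (s - u))) with (f s - f u) in Hv by (field; lra).
    lra.
Qed.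

End Convex.

Section WeightFunction.

Variable omega : R -> R.
Hypothesis omega_weight : weight_function omega.

Lemma weight_mono (s t : R) : 0 <= s -> s <= t -> omega s <= omega t.
Proof. apply omega_weight. Qed.

Lemma weight_eq0 (t : R) : 0 <= t -> t <= 1 -> omega t = 0.
Proof. apply omega_weight. Qed.

Lemma weight_ge0 (t : R) : 0 <= t -> 0 <= omega t.
Proof. intros Ht. rewrite <- (weight_eq0 0) by lra. apply weight_mono; lra. Qed.

Lemma weight_ln_small (eps : R) : 0 < eps ->
  exists T, forall t, T <= t -> ln t <= eps * omega t.
Proof. apply omega_weight. Qed.

Lemma phi_convex (a b l : R) : 0 <= l <= 1 ->
  phi omega (l * a + (1 - l) * b) <= l * phi omega a + (1 - l) * phi omega b.
Proof. apply omega_weight. Qed.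

Lemma phi_ge0 (s : R) : 0 <= phi omega s.
Proof. apply weight_ge0. left; apply exp_pos. Qed.

Lemma phi_mono (a b : R) : a <= b -> phi omega a <= phi omega b.
Proof. intros H. apply weight_mono; [left; apply exp_pos | now apply exp_le]. Qed.

Lemma phi_0 : phi omega 0 = 0.
Proof. unfold phi. rewrite exp_0. apply weight_eq0; lra. Qed.

Lemma phi_star_ge (y s : R) : 0 <= y -> 0 <= s -> s * y - phi omega s <= phi_star omega y.
Proof.
  intros Hy Hs.
  destruct (weight_ln_small (/ (y + 1))) as [T HT]; [apply Rinv_0_lt_compat; lra|].
  apply (Rsup_upper _ (Rabs (ln T) * y)); [|now exists s].
  intros z [r [Hr ->]].
  pose proof (phi_ge0 r). pose proof (Rle_abs (ln T)).
  destruct (Rle_lt_dec T (exp r)) as [HTr|HTr].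
  - (* for large [r], [r = ln (e^r) <= phi r / (y + 1)] *)
    specialize (HT _ HTr). rewrite ln_exp in HT. unfold phi.
    apply (Rmult_le_compat_l (y + 1)) in HT; [|lra].
    rewrite <- Rmult_assoc, Rinv_r, Rmult_1_l in HT by lra.
    pose proof (Rabs_pos (ln T)). nra.
  - assert (r < ln T)
      by (rewrite <- (ln_exp r); apply ln_increasing; [apply exp_pos | exact HTr]).
    nra.
Qed.

Lemma phi_star_ge0 (y : R) : 0 <= y -> 0 <= phi_star omega y.
Proof. intros Hy. pose proof (phi_star_ge y 0 Hy (Rle_refl 0)) as H. rewrite phi_0 in H. lra. Qed.

Lemma phi_star_0 : phi_star omega 0 = 0.
Proof.
  apply Rle_antisym; [|apply phi_star_ge0; lra].
  apply Rsup_least; [now exists (0 * 0 - phi omega 0), 0; split; [lra|]|].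
  intros z [s [_ ->]]. pose proof (phi_ge0 s). lra.
Qed.

(* With a subgradient [g >= 0] of [phi] at [u], the lattice point [x k] just below [g] nearly
   attains the supremum defining [phi* (x k)]. *)
Lemma phi_star_le_at_subgradient (x u : R) : 0 < x -> 0 <= u ->
  exists k : nat, phi_star omega (x * INR k) <= x * INR k * u - phi omega u + u * x.
Proof.
  intros Hx Hu.
  destruct (convex_subgradient (phi omega) phi_convex u) as [g Hg].
  assert (Hg0 : 0 <= g) by (pose proof (Hg (u - 1)); pose proof (phi_mono (u - 1) u); lra).
  destruct (nfloor_ex (g / x)) as [k Hk].
  { apply Rmult_le_pos; [lra | left; apply Rinv_0_lt_compat; lra]. }
  exists k.
  assert (Hxk : x * INR k <= g < x * INR k + x).
  { replace g with (x * (g / x)) by (field; lra). split; nra. }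
  apply Rsup_least; [now exists (0 * (x * INR k) - phi omega 0), 0; split; [lra|]|].
  intros z [s [Hs ->]]. specialize (Hg s). nra.
Qed.

Variable x : R.
Hypothesis x_pos : 0 < x.

Lemma W_pos (k : nat) : 0 < W omega x k.
Proof. apply exp_pos. Qed.

Lemma W_0 : W omega x 0 = 1.
Proof. unfold W. rewrite Rmult_0_r, phi_star_0, Rmult_0_r. apply exp_0. Qed.

Lemma ln_W (k : nat) : ln (W omega x k) = / x * phi_star omega (x * INR k).
Proof. apply ln_exp. Qed.

Lemma W_ge1 (k : nat) : 1 <= W omega x k.
Proof.
  rewrite <- exp_0. apply exp_le, Rmult_le_pos; [left; apply Rinv_0_lt_compat; lra|].
  apply phi_star_ge0. pose proof (pos_INR k). nra.
Qed.

Lemma ln_pow_div_W_le (s : R) (k : nat) : 0 <= s -> ln (s ^ k / W omega x k) <= omega s / x.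
Proof.
  intros Hs. pose proof (W_ge1 k) as HW.
  destruct (Rle_lt_dec 1 s) as [Hs1|Hs1].
  - (* Young's inequality [x k ln s <= phi* (x k) + phi (ln s)] *)
    assert (Hk : 0 <= x * INR k) by (pose proof (pos_INR k); nra).
    assert (Hl : 0 <= ln s) by (rewrite <- ln_1; apply ln_le; lra).
    pose proof (phi_star_ge (x * INR k) (ln s) Hk Hl) as H.
    unfold phi in H. rewrite exp_ln in H by lra.
    rewrite ln_div, ln_pow, ln_W by first [apply pow_lt; lra | lra].
    apply (Rmult_le_reg_l x); [lra|].
    replace (x * (INR k * ln s - / x * phi_star omega (x * INR k))) with
      (ln s * (x * INR k) - phi_star omega (x * INR k)) by (field; lra).
    replace (x * (omega s / x)) with (omega s) by (field; lra). lra.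
  - rewrite weight_eq0, Rdiv_0_l by lra.
    assert (s ^ k <= 1) by (rewrite <- (pow1 k); apply pow_incr; lra).
    apply ln_le_0, (Rdiv_le_1 (s ^ k)); lra.
Qed.

Lemma omega_W_le (s : R) : 0 <= s -> omega_M (W omega x) s <= omega s / x.
Proof. intros Hs. apply omega_M_le. intros k. now apply ln_pow_div_W_le. Qed.

Lemma omega_W_ge0 (s : R) : 0 <= s -> 0 <= omega_M (W omega x) s.
Proof.
  intros Hs. apply (omega_M_ge0 _ _ (omega s / x)); [exact W_0|].
  intros k. now apply ln_pow_div_W_le.
Qed.

Lemma omega_W_ge (s : R) : 1 <= s -> omega s / x - ln s <= omega_M (W omega x) s.
Proof.
  intros Hs. assert (Hl : 0 <= ln s) by (rewrite <- ln_1; apply ln_le; lra).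
  destruct (phi_star_le_at_subgradient x (ln s) x_pos Hl) as [k Hk].
  unfold phi in Hk. rewrite exp_ln in Hk by lra.
  apply Rle_trans with (ln (s ^ k / W omega x k)).
  - rewrite ln_div, ln_pow, ln_W by first [apply pow_lt; lra | apply W_pos | lra].
    apply (Rmult_le_reg_l x); [lra|].
    replace (x * (omega s / x - ln s)) with (omega s - x * ln s) by (field; lra).
    replace (x * (INR k * ln s - / x * phi_star omega (x * INR k)))
      with (x * INR k * ln s - phi_star omega (x * INR k)) by (field; lra).
    lra.
  - apply (omega_M_ge _ _ (omega s / x)). intros j. apply ln_pow_div_W_le; lra.
Qed.

Lemma omega_le_omega_W :
  exists D, forall s, 0 <= s -> omega s <= 2 * x * omega_M (W omega x) s + D.
Proof.
  destruct (weight_ln_small (/ (2 * x))) as [T HT]; [apply Rinv_0_lt_compat; lra|].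
  set (T' := Rmax T 1).
  assert (HT' : T <= T' /\ 1 <= T') by (split; [apply Rmax_l | apply Rmax_r]).
  exists (omega T'). intros s Hs. pose proof (omega_W_ge0 s Hs).
  destruct (Rle_lt_dec T' s) as [HTs|HTs].
  - (* [ln s <= omega s / (2 x)], so [omega s / (2 x) <= omega_W s] *)
    pose proof (omega_W_ge s ltac:(lra)).
    specialize (HT s ltac:(lra)).
    apply (Rmult_le_compat_l (2 * x)) in HT; [|lra].
    rewrite <- Rmult_assoc, Rinv_r, Rmult_1_l in HT by lra.
    pose proof (weight_ge0 T' ltac:(lra)).
    assert (omega s = x * (omega s / x)) by (field; lra).
    nra.
  - pose proof (weight_mono s T' Hs ltac:(lra)). nra.
Qed.

Hypothesis omega_little_o : little_o_t omega.

Lemma legendre_omega_bounded (t : R) : 0 < t ->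
  exists B, forall s, 0 <= s -> omega s - s * t <= B.
Proof.
  intros Ht. destruct (omega_little_o t Ht) as [T HT].
  set (T' := Rmax T 0).
  assert (HT' : T <= T' /\ 0 <= T') by (split; [apply Rmax_l | apply Rmax_r]).
  exists (omega T'). intros s Hs.
  destruct (Rle_lt_dec T' s) as [HTs|HTs].
  - specialize (HT s ltac:(lra)). pose proof (weight_ge0 T' ltac:(lra)). nra.
  - pose proof (weight_mono s T' Hs ltac:(lra)). nra.
Qed.

Lemma omega_star_ge (t s : R) : 0 < t -> 0 <= s -> omega s - s * t <= omega_star omega t.
Proof.
  intros Ht Hs. destruct (legendre_omega_bounded t Ht) as [B HB].
  exact (legendre_ge omega t B s HB Hs).
Qed.

Lemma omega_star_ge0 (t : R) : 0 < t -> 0 <= omega_star omega t.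
Proof.
  intros Ht. pose proof (omega_star_ge t 0 Ht (Rle_refl 0)) as H.
  rewrite weight_eq0 in H by lra. lra.
Qed.

Lemma legendre_omega_W_bounded (u : R) : 0 < u ->
  exists B, forall s, 0 <= s -> omega_M (W omega x) s - s * u <= B.
Proof.
  intros Hu. exists (omega_star omega (x * u) / x). intros s Hs.
  pose proof (omega_W_le s Hs).
  pose proof (omega_star_ge (x * u) s ltac:(nra) Hs).
  apply Rle_trans with ((omega s - s * (x * u)) / x).
  - replace ((omega s - s * (x * u)) / x) with (omega s / x - s * u) by (field; lra). lra.
  - unfold Rdiv. apply Rmult_le_compat_r; [left; apply Rinv_0_lt_compat|]; lra.
Qed.

Local Notation m := (fun k => W omega x k / INR (fact k)).

Lemma ln_pow_div_m_le (t tau : R) (k : nat) : 0 < t -> 0 < tau -> exp 1 * t * tau <= x ->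
  ln (t ^ k / m k) <= omega_star omega tau / x.
Proof.
  intros Ht Htau Hx.
  assert (Hstar : 0 <= omega_star omega tau / x)
    by (apply Rmult_le_pos; [apply omega_star_ge0 | left; apply Rinv_0_lt_compat]; lra).
  destruct k as [|j]; [simpl; rewrite W_0, !Rdiv_1_r, ln_1; exact Hstar|].
  set (k := S j). assert (HK : 0 < INR k) by (apply lt_0_INR; lia).
  pose proof (exp_pos 1). pose proof (W_pos k). pose proof (INR_fact_lt_0 k).
  (* compare with the term of [omega_W] at [s = e k t] *)
  set (s := exp 1 * INR k * t). assert (Hs : 0 < s) by (unfold s; apply Rmult_lt_0_compat; nra).
  replace (t ^ k / m k) with (s ^ k / W omega x k * (INR (fact k) / (exp 1 * INR k) ^ k))
    by (unfold s; rewrite !Rpow_mult_distr; field; repeat split; try apply pow_nonzero; lra).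
  assert (Hek : 0 < exp 1 * INR k) by nra.
  rewrite ln_mult by (apply Rdiv_lt_0_compat; try apply pow_lt; lra).
  rewrite (ln_div (INR (fact k))), ln_pow, ln_mult, ln_exp by (try apply pow_lt; lra).
  pose proof (ln_fact_le k).
  pose proof (ln_pow_div_W_le s k ltac:(lra)).
  pose proof (omega_star_ge tau s Htau ltac:(lra)).
  assert (s * tau <= INR k * x)
    by (replace (s * tau) with (INR k * (exp 1 * t * tau)) by (unfold s; ring);
        apply Rmult_le_compat_l; lra).
  assert (omega s / x <= omega_star omega tau / x + INR k).
  { apply (Rmult_le_reg_l x); [lra|].
    replace (x * (omega s / x)) with (omega s) by (field; lra).
    replace (x * (omega_star omega tau / x + INR k)) with (omega_star omega tau + INR k * x)
      by (field; lra).
    lra. }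
  lra.
Qed.

Lemma omega_m_le (t tau : R) : 0 < t -> 0 < tau -> exp 1 * t * tau <= x ->
  omega_M m t <= omega_star omega tau / x.
Proof. intros Ht Htau Hx. apply omega_M_le. intros k. now apply ln_pow_div_m_le. Qed.

Lemma omega_m_bounded (t : R) : 0 < t -> exists B, forall k, ln (t ^ k / m k) <= B.
Proof.
  intros Ht. pose proof (exp_pos 1).
  exists (omega_star omega (x / (exp 1 * t)) / x). intros k.
  apply ln_pow_div_m_le; [exact Ht | apply Rdiv_lt_0_compat; nra |].
  right. field. lra.
Qed.

Lemma omega_m_ge0 (t : R) : 0 < t -> 0 <= omega_M m t.
Proof.
  intros Ht. destruct (omega_m_bounded t Ht) as [B HB].
  apply (omega_M_ge0 _ _ B); [|exact HB].
  simpl. rewrite W_0. field.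
Qed.

Variable D : R.
Hypothesis omega_le_omega_W_D : forall s, 0 <= s -> omega s <= 2 * x * omega_M (W omega x) s + D.
Variable C : R.
Hypotheses (C_ge1 : 1 <= C) (C_ge_2x : 2 * x <= C) (C_ge_D : D <= C) (C_ge_inv_x : / x <= C).

Lemma omega_star_le_omega_W_star (t : R) : 0 < t ->
  omega_star omega t <= C * omega_M_star (W omega x) (t / C) + C.
Proof.
  intros Ht. destruct (legendre_omega_W_bounded (t / C)) as [B HB]; [apply Rdiv_lt_0_compat; lra|].
  apply (legendre_le_scaled _ _ C C t B); [lra | exact HB |].
  intros s Hs. pose proof (omega_le_omega_W_D s Hs). pose proof (omega_W_ge0 s Hs). nra.
Qed.

Lemma omega_W_star_le_omega_star (t : R) : 0 < t ->
  omega_M_star (W omega x) t <= C * omega_star omega (t / C) + C.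
Proof.
  intros Ht. destruct (legendre_omega_bounded (t / C)) as [B HB]; [apply Rdiv_lt_0_compat; lra|].
  apply (legendre_le_scaled _ _ C C t B); [lra | exact HB |].
  intros s Hs. pose proof (omega_W_le s Hs). pose proof (weight_ge0 s Hs).
  assert (omega s / x <= C * omega s) by (unfold Rdiv; rewrite Rmult_comm; nra).
  lra.
Qed.

Lemma omega_star_le_omega_m (t : R) : 0 < t ->
  omega_star omega t <= C * omega_M m (C / t) + C.
Proof.
  intros Ht. assert (HtC : 0 < t / C) by (apply Rdiv_lt_0_compat; lra).
  pose proof (omega_m_ge0 (C / t) ltac:(apply Rdiv_lt_0_compat; lra)).
  destruct (omega_m_bounded (/ (t / C))) as [B HB]; [now apply Rinv_0_lt_compat|].
  apply legendre_le. intros s Hs.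
  destruct (Req_dec s 0) as [->|Hs0]; [rewrite weight_eq0; nra|].
  pose proof (omega_M_le_shift (W omega x) s (t / C) B W_pos ltac:(lra) HtC HB) as Hshift.
  replace (/ (t / C)) with (C / t) in Hshift by (field; lra).
  pose proof (omega_le_omega_W_D s Hs).
  assert (2 * x * (s * (t / C)) <= s * t).
  { replace (s * t) with (C * (s * (t / C))) by (field; lra).
    apply Rmult_le_compat_r; [apply Rmult_le_pos|]; lra. }
  nra.
Qed.

Lemma omega_m_le_omega_star (t : R) : 0 < t ->
  omega_M m t <= C * omega_star omega (/ (exp 1 * C * t)) + C.
Proof.
  intros Ht. pose proof (exp_pos 1).
  assert (Htau : 0 < / (exp 1 * C * t))
    by (apply Rinv_0_lt_compat, Rmult_lt_0_compat; [apply Rmult_lt_0_compat|]; lra).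
  pose proof (omega_star_ge0 _ Htau).
  apply Rle_trans with (omega_star omega (/ (exp 1 * C * t)) / x).
  - apply omega_m_le; [exact Ht | exact Htau |].
    replace (exp 1 * t * / (exp 1 * C * t)) with (/ C) by (field; lra).
    rewrite <- (Rinv_inv x). apply Rinv_le_contravar; [apply Rinv_0_lt_compat|]; lra.
  - unfold Rdiv. rewrite Rmult_comm. nra.
Qed.

Lemma exp_omega_star_le (t : R) : 0 < t ->
  exp (omega_star omega t) <= Rpower (exp 1 / h_fun m (t / C)) C.
Proof.
  intros Ht. assert (HtC : 0 < t / C) by (apply Rdiv_lt_0_compat; lra).
  destruct (omega_m_bounded (/ (t / C))) as [B HB]; [now apply Rinv_0_lt_compat|].
  assert (Hm : forall k, 0 < m k)
    by (intros k; apply Rdiv_lt_0_compat; [apply W_pos | apply INR_fact_lt_0]).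
  rewrite (h_fun_exp _ (t / C) B Hm HtC HB).
  replace (/ (t / C)) with (C / t) by (field; lra).
  set (a := omega_M m (C / t)).
  replace (exp 1 / exp (- a)) with (exp (1 + a))
    by (rewrite exp_plus, exp_Ropp; field; apply exp_neq_0).
  unfold Rpower. rewrite ln_exp. apply exp_le.
  pose proof (omega_star_le_omega_m t Ht) as Hm3. fold a in Hm3. lra.
Qed.

End WeightFunction.

Theorem corollary3p11 (omega : R -> R)
  (Hw : weight_function omega) (Ho : little_o_t omega) :
  forall x : R, 0 < x ->
  exists C : R, 1 <= C /\
    forall t : R, 0 < t ->
      omega_star omega t <= C * omega_M_star (W omega x) (t / C) + C /\
      omega_M_star (W omega x) t <= C * omega_star omega (t / C) + C /\
      omega_star omega t
        <= C * omega_M (fun k => W omega x k / INR (fact k)) (C / t) + C /\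
      omega_M (fun k => W omega x k / INR (fact k)) t
        <= C * omega_star omega (/ (exp 1 * C * t)) + C /\
      exp (omega_star omega t)
        <= Rpower (exp 1 / h_fun (fun k => W omega x k / INR (fact k)) (t / C)) C.
Proof.
  intros x Hx.
  destruct (omega_le_omega_W omega Hw x Hx) as [D HD].
  set (C := Rmax (Rmax 1 (2 * x)) (Rmax D (/ x))).
  assert (HC1 : 1 <= C) by (unfold C; eapply Rle_trans; apply Rmax_l).
  assert (HC2 : 2 * x <= C) by (unfold C; eapply Rle_trans; [apply Rmax_r | apply Rmax_l]).
  assert (HCD : D <= C) by (unfold C; eapply Rle_trans; [apply Rmax_l | apply Rmax_r]).
  assert (HCx : / x <= C) by (unfold C; eapply Rle_trans; apply Rmax_r).
  exists C. split; [exact HC1|]. intros t Ht.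
  repeat split.
  - apply omega_star_le_omega_W_star with (D := D); assumption.
  - apply omega_W_star_le_omega_star; assumption.
  - apply omega_star_le_omega_m with (D := D); assumption.
  - apply omega_m_le_omega_star; assumption.
  - apply exp_omega_star_le with (D := D); assumption.
Qed.
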